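(* In multihop Peg Duotaire, for every integer $n\ge 0$, the position $11(01)^n$ has nim-value $n+1$.
   Context: Peg Duotaire is an impartial two-player game played on the infinite line of sites indexed by $\mathbb{Z}$, each site holding a peg or being a hole, with finitely many pegs. A word $w\in\{0,1\}^*$ denotes the position in which $w$ is written on consecutive sites ($1$ = peg, $0$ = hole) and all other sites are holes. A hop: for a peg at site $i$, a peg at site $i+d$ and a hole at site $i+2d$ ($d=\pm1$), move the peg from $i$ to $i+2d$ and remove the peg at $i+d$. In the multihop version, a move is a sequence of one or more hops all performed by the same peg. Players alternate moves; a player unable to move loses. The nim-value of a position is the least nonnegative integer not among the nim-values of positions reachable in one move. *)

From Stdlib Require Import ZArith List Bool.
Import ListNotations.
Open Scope Z_scope.

(* A position: which sites of Z hold a peg (true = peg, false = hole). *)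
Definition position := Z -> bool.

(* The position given by a word w written on sites 0, 1, ..., |w|-1,
   all other sites being holes (positions are translation invariant). *)
Definition word_pos (w : list bool) : position :=
  fun k => if (0 <=? k) && (k <? Z.of_nat (length w))
           then nth (Z.to_nat k) w false else false.

Definition hop (p : position) (i d : Z) (q : position) : Prop :=
  (d = 1 \/ d = -1) /\
  p i = true /\ p (i + d) = true /\ p (i + 2 * d) = false /\
  forall k, q k = if (k =? i) || (k =? i + d) then false
                  else if k =? i + 2 * d then true else p k.

Inductive multihop : position -> Z -> position -> Prop :=
  | mh_one p i d q : hop p i d q -> multihop p i q
  | mh_more p i d r q : hop p i d r -> multihop r (i + 2 * d) q -> multihop p i q.

Definition move (p q : position) : Prop := exists i, multihop p i q.

(* Since every move removes a peg, games from finite positions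
   are finite, so this determines a unique value for each finite position. *)
Inductive nimval : position -> nat -> Prop :=
  | nimval_intro p g :
      (forall h, (h < g)%nat -> exists q, move p q /\ nimval q h) ->
      (forall q, move p q -> exists h, nimval q h /\ h <> g) ->
      nimval p g.

Definition w11_01 (n : nat) : list bool :=
  [true; true] ++ concat (repeat [false; true] n).

(* From site a, the position 11(01)^m has exactly two kinds of moves.  The
   leftmost peg may run j >= 1 hops to the right, leaving 11(01)^(m-j) (or a
   lone peg when j = m+1); the second peg may hop left once, leaving a
   position with no two adjacent pegs, from which no hop is possible.
   Pegs further right are isolated and cannot move.  By induction the options
   have the values 0, 1, ..., m and nothing else, so the value is m+1. *)
From Stdlib Require Import ZArith List Lia Bool FunctionalExtensionality.
Import ListNotations.
Open Scope Z_scope.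

Ltac decide_sites :=
  repeat match goal with
  | |- context [?x =? ?y] => destruct (Z.eqb_spec x y)
  | |- context [?x <=? ?y] => destruct (Z.leb_spec x y)
  | |- context [?x <? ?y] => destruct (Z.ltb_spec x y)
  | H : context [?x =? ?y] |- _ => destruct (Z.eqb_spec x y)
  | H : context [?x <=? ?y] |- _ => destruct (Z.leb_spec x y)
  end; cbn [orb andb] in *; try discriminate; try reflexivity;
  try (Z.div_mod_to_equations; lia).

(* The word 11(01)^m written from site a; [comb a (-1)] is a lone peg at a. *)
Definition comb (a m : Z) : position := fun k =>
  (k =? a) || ((a + 1 <=? k) && (k <=? a + 2 * m + 1) && ((k - a) mod 2 =? 1)).

(* [comb a m] after the peg at a+1 hops over a to a-1. *)
Definition comb_jumped_left (a m : Z) : position := fun k =>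
  (k =? a - 1) || ((a + 3 <=? k) && (k <=? a + 2 * m + 1) && ((k - a) mod 2 =? 1)).

Definition no_adjacent_pegs (p : position) : Prop :=
  forall i, p i = true -> p (i + 1) = false.

Lemma no_adjacent_pegs_no_hop p i d q : no_adjacent_pegs p -> ~ hop p i d q.
Proof.
  intros Hp [[-> | ->] [Hi [Hid _]]].
  - now rewrite (Hp i Hi) in Hid.
  - specialize (Hp (i + -1) Hid). replace (i + -1 + 1) with i in Hp by lia. congruence.
Qed.

Lemma no_adjacent_pegs_no_multihop p i q : no_adjacent_pegs p -> ~ multihop p i q.
Proof. intros Hp Hm; inversion Hm; subst; eapply no_adjacent_pegs_no_hop; eauto. Qed.

Lemma nimval_no_adjacent_pegs p : no_adjacent_pegs p -> nimval p 0.
Proof.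
  intros Hp; constructor.
  - intros h Hh; lia.
  - intros q [i Hm]; exfalso; exact (no_adjacent_pegs_no_multihop _ _ _ Hp Hm).
Qed.

Lemma no_adjacent_pegs_lone_peg a : no_adjacent_pegs (comb a (-1)).
Proof. intros i; unfold comb; decide_sites. Qed.

Lemma no_adjacent_pegs_comb_jumped_left a m : no_adjacent_pegs (comb_jumped_left a m).
Proof. intros i; unfold comb_jumped_left; decide_sites. Qed.

Lemma hop_comb_right a m : 0 <= m -> hop (comb a m) a 1 (comb (a + 2) (m - 1)).
Proof. intros Hm; repeat split; auto; intros; unfold comb; decide_sites. Qed.

Lemma hop_comb_left a m : 0 <= m -> hop (comb a m) (a + 1) (-1) (comb_jumped_left a m).
Proof. intros Hm; repeat split; auto; intros; unfold comb, comb_jumped_left; decide_sites. Qed.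

Lemma hop_combE a m i d r : hop (comb a m) i d r ->
  i = a /\ d = 1 /\ 0 <= m /\ r = comb (a + 2) (m - 1) \/
  i = a + 1 /\ d = -1 /\ 0 <= m /\ r = comb_jumped_left a m.
Proof.
  intros [[-> | ->] [Hi [Hid [Hi2d Hr]]]]; unfold comb in Hi, Hid, Hi2d; [left | right];
    decide_sites; repeat split; try lia;
    apply functional_extensionality; intros k; rewrite Hr;
    unfold comb, comb_jumped_left; decide_sites.
Qed.

Lemma multihop_combE a m i q : multihop (comb a m) i q ->
  i = a /\ (exists j : nat, (1 <= j)%nat /\ Z.of_nat j <= m + 1 /\
              q = comb (a + 2 * Z.of_nat j) (m - Z.of_nat j)) \/
  i = a + 1 /\ q = comb_jumped_left a m.
Proof.
  intros Hmh; remember (comb a m) as p eqn:Ep; revert a m Ep.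
  induction Hmh as [p i d q Hh | p i d r q Hh Hmh IH]; intros a m ->.
  - destruct (hop_combE _ _ _ _ _ Hh) as [[-> [_ [Hm0 ->]]] | [-> [_ [_ ->]]]];
      [left | now right].
    split; [reflexivity |]; exists 1%nat; split; [lia | split; [lia |]]. f_equal; lia.
  - destruct (hop_combE _ _ _ _ _ Hh) as [[-> [-> [_ ->]]] | [_ [_ [_ ->]]]].
    + destruct (IH (a + 2) (m - 1) eq_refl)
        as [[_ [j [Hj1 [Hjm ->]]]] | [Hi _]]; [left | lia].
      split; [reflexivity |]; exists (S j); split; [lia | split; [lia |]]. f_equal; lia.
    + exfalso; eapply no_adjacent_pegs_no_multihop;
        [apply no_adjacent_pegs_comb_jumped_left | exact Hmh].
Qed.

Lemma multihop_comb_right (j : nat) a m : (1 <= j)%nat -> Z.of_nat j <= m + 1 ->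
  multihop (comb a m) a (comb (a + 2 * Z.of_nat j) (m - Z.of_nat j)).
Proof.
  revert a m; induction j as [| [| j] IH]; intros a m Hj1 Hjm; [lia | |].
  - apply mh_one with 1; replace (a + 2 * Z.of_nat 1) with (a + 2) by lia.
    apply hop_comb_right; lia.
  - apply mh_more with 1 (comb (a + 2) (m - 1)); [apply hop_comb_right; lia |].
    replace (a + 2 * Z.of_nat (S (S j))) with (a + 2 + 2 * Z.of_nat (S j)) by lia.
    replace (m - Z.of_nat (S (S j))) with (m - 1 - Z.of_nat (S j)) by lia.
    apply IH; lia.
Qed.

Lemma nimval_comb (n : nat) : forall a, nimval (comb a (Z.of_nat n)) (S n).
Proof.
  induction n as [n IH] using (well_founded_induction lt_wf); intros a; constructor.
  - intros [| h] Hh.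
    + exists (comb_jumped_left a (Z.of_nat n)); split.
      * exists (a + 1); apply mh_one with (-1); apply hop_comb_left; lia.
      * apply nimval_no_adjacent_pegs, no_adjacent_pegs_comb_jumped_left.
    + exists (comb (a + 2 * Z.of_nat (n - h)) (Z.of_nat h)); split.
      * exists a; replace (Z.of_nat h) with (Z.of_nat n - Z.of_nat (n - h)) by lia.
        apply multihop_comb_right; lia.
      * apply IH; lia.
  - intros q [i Hmh].
    destruct (multihop_combE _ _ _ _ Hmh) as [[_ [j [Hj1 [Hjn ->]]]] | [_ ->]].
    + destruct (Nat.eq_dec j (S n)) as [-> | Hj].
      * exists 0%nat; split; [| lia]; apply nimval_no_adjacent_pegs.
        replace (Z.of_nat n - Z.of_nat (S n)) with (-1) by lia.
        apply no_adjacent_pegs_lone_peg.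
      * exists (S (n - j)); split; [| lia].
        replace (Z.of_nat n - Z.of_nat j) with (Z.of_nat (n - j)) by lia.
        apply IH; lia.
    + exists 0%nat; split; [| lia].
      apply nimval_no_adjacent_pegs, no_adjacent_pegs_comb_jumped_left.
Qed.

Lemma word_pos_cons b w k :
  word_pos (b :: w) k = if k =? 0 then b else word_pos w (k - 1).
Proof.
  unfold word_pos; cbn [length]; rewrite Nat2Z.inj_succ.
  destruct (Z.eqb_spec k 0) as [-> | Hk].
  - destruct (Z.ltb_spec 0 (Z.succ (Z.of_nat (length w)))); [reflexivity | lia].
  - destruct (Z.leb_spec 0 k); [| destruct (Z.leb_spec 0 (k - 1)); [lia | reflexivity]].
    replace (Z.to_nat k) with (S (Z.to_nat (k - 1))) by lia.
    destruct (Z.leb_spec 0 (k - 1)); [| lia].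
    destruct (Z.ltb_spec k (Z.succ (Z.of_nat (length w))));
      destruct (Z.ltb_spec (k - 1) (Z.of_nat (length w))); reflexivity || lia.
Qed.

Lemma word_pos_nil k : word_pos [] k = false.
Proof. unfold word_pos; destruct (_ && _); [destruct (Z.to_nat k) |]; reflexivity. Qed.

Lemma word_pos_concat_repeat_01 (n : nat) k :
  word_pos (concat (repeat [false; true] n)) k =
  (0 <=? k) && (k <? 2 * Z.of_nat n) && (k mod 2 =? 1).
Proof.
  revert k; induction n as [| n IH]; intros k.
  - rewrite word_pos_nil; destruct (Z.leb_spec 0 k); destruct (Z.ltb_spec k 0); cbn; lia.
  - cbn [repeat concat app]; rewrite !word_pos_cons, IH; decide_sites.
Qed.

Lemma word_pos_w11_01 (n : nat) : word_pos (w11_01 n) = comb 0 (Z.of_nat n).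
Proof.
  apply functional_extensionality; intros k; unfold w11_01; cbn [app].
  rewrite !word_pos_cons, word_pos_concat_repeat_01; unfold comb; decide_sites.
Qed.

Theorem mainTheorem6 : forall n : nat, nimval (word_pos (w11_01 n)) (S n).
Proof. intros n; rewrite word_pos_w11_01; apply nimval_comb. Qed.
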